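(* Let $\mathscr P_1,\mathscr P_2$ be non-empty collections of $L^0$-seminorms on a stable $L^0$-module $E$. If $\mathscr T_0(\mathscr P_1)=\mathscr T_0(\mathscr P_2)$, then $\mathscr T_{\epsilon,\lambda}(\mathscr P_1)=\mathscr T_{\epsilon,\lambda}(\mathscr P_2)$.
   Context: $(\Omega,\mathcal F,\mathbb P)$ is a probability space, $L^0$ the real-valued measurable functions modulo a.e. equality (ordered a.e.), $L^0_+=\{r\ge0\}$, $L^0_{++}=\{r\in L^0:r>0\text{ a.e.}\}$. An $L^0$-module $E$ is stable if for every countable measurable partition $(A_k)$ of $\Omega$ and $(x_k)\subset E$ there is a unique $x\in E$ with $1_{A_k}x=1_{A_k}x_k$ for all $k$. An $L^0$-seminorm is a map $p:E\to L^0_+$ with $p(rx)=|r|p(x)$ and $p(x+y)\le p(x)+p(y)$. For a collection $\mathscr P$ of $L^0$-seminorms: $\mathscr T_0(\mathscr P)$ (locally $L^0$-convex topology) is generated by the base of sets $U_{x,N,r}=\{y\in E:\sup_{p\in N}p(x-y)<r\}$ with $x\in E$, $N\subset\mathscr P$ finite, $r\in L^0_{++}$; $\mathscr T_{\epsilon,\lambda}(\mathscr P)$ (the $(\epsilon,\lambda)$-topology) is generated by the base of sets $U_{x,N,\epsilon,\lambda}=\{y\in E:\mathbb P(\sup_{p\in N}p(x-y)<\epsilon)>1-\lambda\}$ with $x\in E$, $N\subset\mathscr P$ finite, real $\epsilon>0$, $0<\lambda<1$. *)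

From Stdlib Require Import Reals List ClassicalEpsilon.
Open Scope R_scope.

Record ProbSpace := {
  Omega : Type;
  Fsig : (Omega -> Prop) -> Prop;
  Fsig_full : Fsig (fun _ => True);
  Fsig_compl : forall A, Fsig A -> Fsig (fun w => ~ A w);
  Fsig_cunion : forall A : nat -> Omega -> Prop,
      (forall n, Fsig (A n)) -> Fsig (fun w => exists n, A n w);
  Prob : (Omega -> Prop) -> R;
  Prob_nonneg : forall A, Fsig A -> 0 <= Prob A;
  Prob_full : Prob (fun _ => True) = 1;
  Prob_sigma : forall A : nat -> Omega -> Prop,
      (forall n, Fsig (A n)) ->
      (forall m n w, m <> n -> A m w -> A n w -> False) ->
      infinite_sum (fun n => Prob (A n)) (Prob (fun w => exists n, A n w))
}.

Section L0.
Variable ps : ProbSpace.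
Local Notation Om := (Omega ps).

(** real-valued measurable functions = representatives of elements of L^0 *)
Definition meas (f : Om -> R) : Prop := forall a : R, Fsig ps (fun w => f w < a).

Definition ae (Q : Om -> Prop) : Prop :=
  exists N, Fsig ps N /\ Prob ps N = 0 /\ forall w, ~ N w -> Q w.

Definition L0pp (r : Om -> R) : Prop := meas r /\ ae (fun w => 0 < r w).

Definition ind (A : Om -> Prop) : Om -> R :=
  fun w => if excluded_middle_informative (A w) then 1 else 0.

End L0.

(** The carrier is the (already quotiented) module E with
    Leibniz equality; scalars are measurable representatives, and a.e.-equal
    scalars act identically, so this is exactly a module over L^0. *)
Record L0Module (ps : ProbSpace) := {
  Ecar :> Type;
  ezero : Ecar;
  eadd : Ecar -> Ecar -> Ecar;
  eopp : Ecar -> Ecar;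
  esmul : (Omega ps -> R) -> Ecar -> Ecar;
  eaddA : forall x y z, eadd x (eadd y z) = eadd (eadd x y) z;
  eaddC : forall x y, eadd x y = eadd y x;
  eadd0 : forall x, eadd x ezero = x;
  eaddN : forall x, eadd x (eopp x) = ezero;
  esmul_ae : forall r s x, meas ps r -> meas ps s ->
      ae ps (fun w => r w = s w) -> esmul r x = esmul s x;
  esmulDr : forall r x y, meas ps r -> esmul r (eadd x y) = eadd (esmul r x) (esmul r y);
  esmulDl : forall r s x, meas ps r -> meas ps s ->
      esmul (fun w => r w + s w) x = eadd (esmul r x) (esmul s x);
  esmulA : forall r s x, meas ps r -> meas ps s ->
      esmul (fun w => r w * s w) x = esmul r (esmul s x);
  esmul1 : forall x, esmul (fun _ => 1) x = x
}.

Arguments ezero {ps} _.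
Arguments eadd {ps l}.
Arguments eopp {ps l}.
Arguments esmul {ps l}.

Section Topologies.
Variable ps : ProbSpace.
Variable M : L0Module ps.
Local Notation Om := (Omega ps).

Definition esub (x y : M) : M := eadd x (eopp y).

Definition stable : Prop :=
  forall (A : nat -> Om -> Prop) (xs : nat -> M),
    (forall k, Fsig ps (A k)) ->
    (forall m n w, m <> n -> A m w -> A n w -> False) ->
    (forall w, exists k, A k w) ->
    exists! x : M, forall k, esmul (ind ps (A k)) x = esmul (ind ps (A k)) (xs k).

Definition L0seminorm (p : M -> Om -> R) : Prop :=
  (forall x, meas ps (p x)) /\
  (forall x, ae ps (fun w => 0 <= p x w)) /\
  (forall r x, meas ps r -> ae ps (fun w => p (esmul r x) w = Rabs (r w) * p x w)) /\
  (forall x y, ae ps (fun w => p (eadd x y) w <= p x w + p y w)).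

Definition seminorm_family (PP : (M -> Om -> R) -> Prop) : Prop :=
  forall p, PP p -> L0seminorm p.

(** finite subsets N of PP are given by lists; sup_{p in N} p(z), pointwise *)
Definition supN (N : list (M -> Om -> R)) (z : M) : Om -> R :=
  fun w => fold_right (fun p acc => Rmax (p z w) acc) 0 N.

Definition finsub (PP : (M -> Om -> R) -> Prop) (N : list (M -> Om -> R)) : Prop :=
  forall p, In p N -> PP p.

Definition U0 (x : M) (N : list (M -> Om -> R)) (r : Om -> R) : M -> Prop :=
  fun y => ae ps (fun w => supN N (esub x y) w < r w).

Definition Uel (x : M) (N : list (M -> Om -> R)) (eps lam : R) : M -> Prop :=
  fun y => Prob ps (fun w => supN N (esub x y) w < eps) > 1 - lam.

Definition T0_base (PP : (M -> Om -> R) -> Prop) (B : M -> Prop) : Prop :=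
  exists x N r, finsub PP N /\ L0pp ps r /\ forall y, B y <-> U0 x N r y.

Definition Tel_base (PP : (M -> Om -> R) -> Prop) (B : M -> Prop) : Prop :=
  exists x N eps lam, finsub PP N /\ 0 < eps /\ 0 < lam < 1 /\
    forall y, B y <-> Uel x N eps lam y.

Definition gen_open (base : (M -> Prop) -> Prop) (O : M -> Prop) : Prop :=
  forall y, O y -> exists B, base B /\ B y /\ forall z, B z -> O z.

Definition T0_open (PP : (M -> Om -> R) -> Prop) := gen_open (T0_base PP).
Definition Tel_open (PP : (M -> Om -> R) -> Prop) := gen_open (Tel_base PP).

End Topologies.

Arguments stable {ps} M.
Arguments seminorm_family {ps} M PP.
Arguments T0_open {ps} M PP O.
Arguments Tel_open {ps} M PP O.

(* Let [U] be the basic (eps, lam)-neighbourhood of [y] given by [x] and [N1 ⊆ P1], and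
   [g = sup_(N1) p(x - y)].  The L^0-ball of [y] for [N1] whose radius is the slack
   [eps - g] on [{g < eps}] is T_0(P1)-open, hence contains a T_0(P2)-ball [U0 c N2 r2]
   around [y]; by continuity of the probability from below, [{h + eps' < r2}] has
   probability close to 1 for some real [eps' > 0], where [h = sup_(N2) p(c - y)].  For [z] in the
   (eps', lam')-ball of [y] for [N2], localising [y - z] to the good event [A] by the
   indicator [1_A] keeps [y - 1_A (y - z)] in the T_0(P2)-ball, hence in the slack ball,
   and on [{g < eps} ∩ A] the triangle inequality gives [sup_(N1) p(x - z) < eps];
   counting probabilities puts [z] in [U]. *)

From Pilot Require Import Defs.
From Stdlib Require Import Reals List ClassicalEpsilon Classical Lra Lia
  FunctionalExtensionality PropExtensionality ZArith.
Open Scope R_scope.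

Section Probability.
Variable ps : ProbSpace.
Local Notation Om := (Omega ps).
Local Notation F := (Fsig ps).
Local Notation P := (Prob ps).

Lemma Fsig_ext (A B : Om -> Prop) : F A -> (forall w, A w <-> B w) -> F B.
Proof.
  intros HA H.
  replace B with A; [exact HA |].
  apply functional_extensionality; intro w; apply propositional_extensionality; auto.
Qed.

Lemma Prob_ext (A B : Om -> Prop) : (forall w, A w <-> B w) -> P A = P B.
Proof.
  intros H; f_equal.
  apply functional_extensionality; intro w; apply propositional_extensionality; auto.
Qed.

Lemma Fsig_or (A B : Om -> Prop) : F A -> F B -> F (fun w => A w \/ B w).
Proof.
  intros HA HB.
  apply Fsig_ext with (fun w => exists n, (match n with 0%nat => A | _ => B end) w).
  - apply Fsig_cunion; intros [|n]; auto.
  - intro w; split.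
    + intros [[|n] H]; auto.
    + intros [H|H]; [exists 0%nat | exists 1%nat]; auto.
Qed.

Lemma Fsig_and (A B : Om -> Prop) : F A -> F B -> F (fun w => A w /\ B w).
Proof.
  intros HA HB.
  apply Fsig_ext with (fun w => ~ (~ A w \/ ~ B w)).
  - apply Fsig_compl, Fsig_or; apply Fsig_compl; auto.
  - intro w; tauto.
Qed.

Lemma Fsig_diff (A B : Om -> Prop) : F A -> F B -> F (fun w => A w /\ ~ B w).
Proof. intros; apply Fsig_and; auto using Fsig_compl. Qed.

Lemma Fsig_const (Q : Prop) : F (fun _ => Q).
Proof.
  destruct (classic Q) as [H|H].
  - apply Fsig_ext with (fun _ => True); [apply Fsig_full | tauto].
  - apply Fsig_ext with (fun _ => ~ True); [apply Fsig_compl, Fsig_full | tauto].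
Qed.

Lemma meas_const (c : R) : meas ps (fun _ => c).
Proof. intro a; apply Fsig_const. Qed.

Lemma Fsig_le (f : Om -> R) (a : R) : meas ps f -> F (fun w => a <= f w).
Proof.
  intros Hf; apply Fsig_ext with (fun w => ~ f w < a).
  - apply Fsig_compl, Hf.
  - intro w; split; intro; lra.
Qed.

Lemma arch_inv_S (d : R) : 0 < d -> exists n : nat, / INR (S n) < d.
Proof.
  intros Hd; destruct (archimed_cor1 d Hd) as [[|n] [Hn Hpos]]; [lia |].
  exists n; exact Hn.
Qed.

(* Rationals [m/(n+1)] with a sign separate [f w + c] from [g w]. *)
Lemma Fsig_plus_lt (f g : Om -> R) (c : R) :
  meas ps f -> meas ps g -> F (fun w => f w + c < g w).
Proof.
  intros Hf Hg.
  set (q := fun (b : bool) (n m : nat) => (if b then INR m else - INR m) / INR (S n)).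
  apply Fsig_ext with (fun w => exists n m : nat,
     (f w < q true n m - c /\ q true n m <= g w)
     \/ (f w < q false n m - c /\ q false n m <= g w)).
  - apply Fsig_cunion; intro n; apply Fsig_cunion; intro m.
    apply Fsig_or; apply Fsig_and; auto using Fsig_le.
  - intro w; split; [intros [n [m [[H1 H2]|[H1 H2]]]]; lra |].
    intro H; destruct (arch_inv_S (g w - f w - c)) as [n Hn]; [lra |].
    assert (HN : 0 < INR (S n)) by apply lt_0_INR, Nat.lt_0_succ.
    destruct (archimed ((f w + c) * INR (S n))) as [K1 K2].
    set (k := up ((f w + c) * INR (S n))) in *.
    assert (Hq : f w + c < IZR k / INR (S n) <= g w).
    { assert (Hk : IZR k / INR (S n) = f w + c + (IZR k - (f w + c) * INR (S n)) / INR (S n))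
        by (field; lra).
      rewrite Hk; split.
      - assert (0 < (IZR k - (f w + c) * INR (S n)) / INR (S n))
          by (apply Rdiv_lt_0_compat; lra); lra.
      - assert ((IZR k - (f w + c) * INR (S n)) / INR (S n) <= 1 / INR (S n))
          by (apply Rmult_le_compat_r; [apply Rlt_le, Rinv_0_lt_compat |]; lra).
        unfold Rdiv in *; lra. }
    exists n; destruct (Z.le_gt_cases 0 k) as [Hk|Hk].
    + exists (Z.to_nat k); left; unfold q.
      rewrite INR_IZR_INZ, Z2Nat.id by exact Hk; lra.
    + exists (Z.to_nat (- k)); right; unfold q.
      rewrite INR_IZR_INZ, Z2Nat.id, opp_IZR, Ropp_involutive by lia; lra.
Qed.

Lemma meas_Rmax (f g : Om -> R) :
  meas ps f -> meas ps g -> meas ps (fun w => Rmax (f w) (g w)).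
Proof.
  intros Hf Hg a; apply Fsig_ext with (fun w => f w < a /\ g w < a).
  - apply Fsig_and; auto.
  - intro w; split.
    + intros [H1 H2]; apply Rmax_lub_lt; auto.
    + intro H; pose proof (Rmax_l (f w) (g w)); pose proof (Rmax_r (f w) (g w)); lra.
Qed.

Lemma meas_ind (A : Om -> Prop) : F A -> meas ps (Defs.ind ps A).
Proof.
  intros HA a; apply Fsig_ext with (fun w => (A w /\ 1 < a) \/ (~ A w /\ 0 < a)).
  - apply Fsig_or; apply Fsig_and; auto using Fsig_const, Fsig_compl.
  - intro w; unfold Defs.ind; destruct excluded_middle_informative; split; intuition.
Qed.

Lemma Prob_empty : P (fun _ => False) = 0.
Proof.
  pose proof (Prob_sigma ps (fun _ _ => False) (fun _ => Fsig_const False)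
    ltac:(tauto)) as H.
  rewrite (Prob_ext _ (fun _ => False)) in H by (intro w; split; [intros [_ []] | tauto]).
  set (c := P (fun _ => False)) in *.
  destruct (Req_dec c 0) as [E|E]; auto; exfalso.
  assert (Hc : 0 < Rabs c / 2) by (pose proof (Rabs_pos_lt c E); lra).
  destruct (H _ Hc) as [N HN].
  pose proof (HN N (le_n _)) as A1; pose proof (HN (S N) (le_S _ _ (le_n _))) as A2.
  unfold Rdist in A1, A2; rewrite sum_cte in A1, A2; rewrite (S_INR (S N)) in A2.
  apply Rabs_def2 in A1, A2.
  destruct (Rcase_abs c); [rewrite Rabs_left in * | rewrite Rabs_right in *]; lra.
Qed.

Lemma Prob_or_disjoint (A B : Om -> Prop) : F A -> F B ->
  (forall w, A w -> B w -> False) -> P (fun w => A w \/ B w) = P A + P B.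
Proof.
  intros HA HB Hd.
  set (s := fun n : nat => match n with 0%nat => A | 1%nat => B | _ => fun _ => False end).
  assert (Hs : forall n, F (s n)) by (intros [|[|n]]; simpl; auto using Fsig_const).
  assert (Hsd : forall m n w, m <> n -> s m w -> s n w -> False).
  { intros [|[|m]] [|[|n]] w Hmn; simpl; try tauto; eauto; lia. }
  pose proof (Prob_sigma ps s Hs Hsd) as H.
  rewrite (Prob_ext _ (fun w => A w \/ B w)) in H.
  2:{ intro w; split; [intros [[|[|n]] Hn]; simpl in Hn; tauto |].
      intros [H1|H1]; [exists 0%nat | exists 1%nat]; auto. }
  apply (uniqueness_sum _ _ _ H).
  intros eps Heps; exists 1%nat; intros [|n] Hn; [lia |].
  assert (E : sum_f_R0 (fun n => P (s n)) (S n) = P A + P B).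
  { induction n; simpl sum_f_R0 in *; [reflexivity |].
    rewrite IHn by lia; simpl; rewrite Prob_empty; ring. }
  rewrite E; unfold Rdist; rewrite Rminus_diag, Rabs_R0; lra.
Qed.

Lemma Prob_split (A B : Om -> Prop) : F A -> F B ->
  P A = P (fun w => A w /\ B w) + P (fun w => A w /\ ~ B w).
Proof.
  intros HA HB.
  rewrite <- Prob_or_disjoint by (auto using Fsig_and, Fsig_diff; tauto).
  apply Prob_ext; intro w; destruct (classic (B w)); tauto.
Qed.

Lemma Prob_le_compat (A B : Om -> Prop) : F A -> F B ->
  (forall w, A w -> B w) -> P A <= P B.
Proof.
  intros HA HB H.
  rewrite (Prob_split B A), (Prob_ext (fun w => B w /\ A w) A) by (firstorder).
  pose proof (Prob_nonneg ps _ (Fsig_diff _ _ HB HA)); lra.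
Qed.

Lemma Prob_or_le (A B : Om -> Prop) : F A -> F B ->
  P (fun w => A w \/ B w) <= P A + P B.
Proof.
  intros HA HB.
  rewrite (Prob_ext _ (fun w => A w \/ (B w /\ ~ A w)))
    by (intro w; destruct (classic (A w)); tauto).
  rewrite Prob_or_disjoint by (auto using Fsig_diff; tauto).
  pose proof (Prob_le_compat (fun w => B w /\ ~ A w) B
    ltac:(auto using Fsig_diff) HB ltac:(intros w []; auto)); lra.
Qed.

Lemma Prob_and_ge (A B : Om -> Prop) : F A -> F B ->
  P A + P B - 1 <= P (fun w => A w /\ B w).
Proof.
  intros HA HB.
  rewrite (Prob_split A B) by auto.
  pose proof (Prob_or_disjoint B (fun w => ~ B w) HB (Fsig_compl _ _ HB) ltac:(auto)) as E.
  rewrite (Prob_ext _ (fun _ => True)), Prob_full in E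
    by (intro w; split; [tauto | intros; apply classic]).
  pose proof (Prob_le_compat (fun w => A w /\ ~ B w) (fun w => ~ B w)
    ltac:(auto using Fsig_diff) ltac:(auto using Fsig_compl) ltac:(intros w []; auto)); lra.
Qed.

Lemma ae_impl (Q Q' : Om -> Prop) : ae ps Q -> (forall w, Q w -> Q' w) -> ae ps Q'.
Proof. intros [N [HN [HN0 H]]] HQ; exists N; auto. Qed.

Lemma ae_True : ae ps (fun _ => True).
Proof. exists (fun _ => False); auto using Fsig_const, Prob_empty. Qed.

Lemma ae_and (Q Q' : Om -> Prop) : ae ps Q -> ae ps Q' -> ae ps (fun w => Q w /\ Q' w).
Proof.
  intros [N [HN [HN0 H]]] [N' [HN' [HN'0 H']]].
  exists (fun w => N w \/ N' w); split; [auto using Fsig_or | split; [| firstorder]].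
  pose proof (Prob_or_le N N' HN HN').
  pose proof (Prob_nonneg ps _ (Fsig_or _ _ HN HN')); lra.
Qed.

Lemma Prob_le_ae (A B : Om -> Prop) : F A -> F B ->
  ae ps (fun w => A w -> B w) -> P A <= P B.
Proof.
  intros HA HB [N [HN [HN0 H]]].
  apply Rle_trans with (P (fun w => B w \/ N w)).
  - apply Prob_le_compat; auto using Fsig_or.
    intros w Hw; destruct (classic (N w)); auto.
  - pose proof (Prob_or_le B N HB HN); lra.
Qed.

Lemma Prob_ae_ge_1 (A : Om -> Prop) : F A -> ae ps A -> 1 <= P A.
Proof.
  intros HA H; rewrite <- (Prob_full ps).
  apply Prob_le_ae; auto using Fsig_full.
  eapply ae_impl; eauto.
Qed.

Lemma Prob_increasing_union_gt (G : nat -> Om -> Prop) (c : R) :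
  (forall n, F (G n)) -> (forall n w, G n w -> G (S n) w) ->
  P (fun w => exists n, G n w) > c -> exists n, P (G n) > c.
Proof.
  intros HG Hinc Hc.
  assert (Hmono : forall m n w, (m <= n)%nat -> G m w -> G n w)
    by (intros m n w Hmn; induction Hmn; auto).
  set (D := fun n => match n with 0%nat => G 0%nat | S k => fun w => G (S k) w /\ ~ G k w end).
  assert (HD : forall n, F (D n)) by (intros [|n]; simpl; auto using Fsig_diff).
  assert (Hsum : forall n, sum_f_R0 (fun k => P (D k)) n = P (G n)).
  { induction n; [reflexivity |]; simpl sum_f_R0; rewrite IHn.
    rewrite (Prob_split (G (S n)) (G n)) by auto.
    rewrite (Prob_ext (fun w => G (S n) w /\ G n w) (G n)) by firstorder; reflexivity. }
  assert (Hdis : forall m n w, (m < n)%nat -> D m w -> D n w -> False).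
  { intros m [|n] w Hmn Hm Hn; [lia |]; destruct Hn as [_ Hn].
    apply Hn, (Hmono m); [lia | destruct m; [exact Hm | apply Hm]]. }
  pose proof (Prob_sigma ps D HD) as H.
  rewrite (Prob_ext _ (fun w => exists n, G n w)) in H.
  2:{ intro w; split; [intros [[|n] Hn]; [exists 0%nat | exists (S n); apply Hn]; auto |].
      intros [n Hn]; induction n; [exists 0%nat; auto |].
      destruct (classic (G n w)); auto; exists (S n); split; auto. }
  destruct (H ltac:(intros m n w Hmn; destruct (Nat.lt_gt_cases m n) as [[?|?] _];
                    eauto; intros; eapply Hdis; eauto)
              (P (fun w => exists n, G n w) - c)) as [N HN]; [lra |].
  exists N; specialize (HN N (le_n _)); unfold Rdist in HN; rewrite Hsum in HN.
  apply Rabs_def2 in HN; lra.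
Qed.

Lemma ae_lt_margin (h r : Om -> R) (a : R) : meas ps h -> meas ps r ->
  ae ps (fun w => h w < r w) -> 0 < a ->
  exists eps, 0 < eps /\ P (fun w => h w + eps < r w) > 1 - a.
Proof.
  intros Hh Hr Hlt Ha.
  set (G := fun (n : nat) w => h w + / INR (S n) < r w).
  assert (HG : forall n, F (G n)) by (intro n; apply Fsig_plus_lt; auto).
  assert (Hinc : forall n w, G n w -> G (S n) w).
  { intros n w; unfold G.
    assert (/ INR (S (S n)) <= / INR (S n)); [| lra].
    apply Rinv_le_contravar; [apply lt_0_INR; lia | apply le_INR; lia]. }
  destruct (Prob_increasing_union_gt G (1 - a) HG Hinc) as [n Hn].
  - assert (1 <= P (fun w => exists n, G n w)); [| lra].
    apply Prob_ae_ge_1; [apply Fsig_cunion, HG |].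
    eapply ae_impl; [exact Hlt |]; intros w Hw.
    destruct (arch_inv_S (r w - h w)) as [n Hn]; [lra |].
    exists n; unfold G; lra.
  - exists (/ INR (S n)); split; [apply Rinv_0_lt_compat, lt_0_INR; lia | exact Hn].
Qed.

Definition slack (g : Om -> R) (eps : R) : Om -> R :=
  fun w => if Rlt_dec (g w) eps then eps - g w else 1.

Lemma L0pp_slack (g : Om -> R) (eps : R) : meas ps g -> L0pp ps (slack g eps).
Proof.
  intros Hg; split.
  - intro a; apply Fsig_ext with (fun w =>
      (g w < eps /\ (fun _ => 0) w + (eps - a) < g w) \/ (~ g w < eps /\ 1 < a)).
    + apply Fsig_or; apply Fsig_and;
        auto using Fsig_compl, Fsig_const, Fsig_plus_lt, meas_const.
    + intro w; unfold slack; destruct Rlt_dec; split; intros; try lra; intuition lra.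
  - eapply ae_impl; [apply ae_True |]; intros w _; unfold slack; destruct Rlt_dec; lra.
Qed.

Lemma slack_eq (g : Om -> R) (eps : R) (w : Om) : g w < eps -> g w + slack g eps w = eps.
Proof. intros H; unfold slack; destruct Rlt_dec; [ring | contradiction]. Qed.

End Probability.

Section Seminorms.
Variable ps : ProbSpace.
Variable M : L0Module ps.
Local Notation Om := (Omega ps).
Local Notation F := (Fsig ps).
Local Notation sN := (supN ps M).
Local Notation e0 := (ezero M).
Local Notation esub := (esub ps M).

Lemma eadd0_l (x : M) : eadd e0 x = x.
Proof. rewrite eaddC; apply eadd0. Qed.

Lemma eopp_unique (a b : M) : eadd a b = e0 -> b = eopp a.
Proof.
  intros H; rewrite <- (eadd0 ps M b), <- (eaddN ps M a), eaddA, (eaddC ps M b a), H.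
  apply eadd0_l.
Qed.

Lemma esub_diag (x : M) : esub x x = e0.
Proof. apply eaddN. Qed.

Lemma esub_chain (x y z : M) : esub x z = eadd (esub x y) (esub y z).
Proof.
  unfold Defs.esub; rewrite <- eaddA, (eaddA ps M (eopp y) y), (eaddC ps M (eopp y) y),
    eaddN, eadd0_l; reflexivity.
Qed.

Lemma esub_esub (y u : M) : esub y (esub y u) = u.
Proof.
  unfold Defs.esub.
  assert (Hopp : eopp (eadd y (eopp u)) = eadd (eopp y) u).
  { symmetry; apply eopp_unique.
    rewrite <- eaddA, (eaddC ps M (eopp u) (eadd (eopp y) u)), <- (eaddA ps M (eopp y) u),
      eaddN, eadd0, eaddN; reflexivity. }
  rewrite Hopp, eaddA, eaddN, eadd0_l; reflexivity.
Qed.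

Lemma esmul_0 (x : M) : esmul (fun _ => 0) x = e0.
Proof.
  pose proof (esmulDl ps M (fun _ => 0) (fun _ => 0) x (meas_const ps 0) (meas_const ps 0)) as H.
  cbv beta in H; replace (fun _ : Om => 0 + 0) with (fun _ : Om => 0) in H
    by (apply functional_extensionality; intro; ring).
  set (a := esmul (fun _ => 0) x) in *.
  assert (H2 : eadd a (eopp a) = eadd (eadd a a) (eopp a)) by (rewrite <- H; reflexivity).
  rewrite <- eaddA, eaddN, eadd0 in H2; auto.
Qed.

Lemma seminorm_zero (p : M -> Om -> R) : L0seminorm ps M p -> ae ps (fun w => p e0 w = 0).
Proof.
  intros [_ [_ [Hhom _]]].
  eapply ae_impl; [apply (Hhom (fun _ => 0) e0 (meas_const ps 0)) |].
  intros w Hw; rewrite esmul_0 in Hw; rewrite Hw, Rabs_R0; ring.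
Qed.

Lemma supN_nonneg N z w : 0 <= sN N z w.
Proof.
  unfold supN; induction N as [|p N IH]; simpl; [lra |].
  eapply Rle_trans; [exact IH | apply Rmax_r].
Qed.

Lemma supN_ge N z w p : In p N -> p z w <= sN N z w.
Proof.
  unfold supN; induction N as [|q N IH]; simpl; [tauto |].
  intros [<-|H]; [apply Rmax_l |].
  eapply Rle_trans; [apply IH; auto | apply Rmax_r].
Qed.

Lemma supN_lub N z w c : (forall p, In p N -> p z w <= c) -> 0 <= c -> sN N z w <= c.
Proof.
  unfold supN; induction N as [|q N IH]; simpl; intros H Hc; auto.
  apply Rmax_lub; auto.
Qed.

Lemma supN_ext N a b w : (forall p, In p N -> p a w = p b w) -> sN N a w = sN N b w.
Proof.
  unfold supN; induction N as [|q N IH]; simpl; intros H; auto.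
  rewrite H, IH; auto.
Qed.

Lemma meas_supN N z : (forall p, In p N -> L0seminorm ps M p) -> meas ps (sN N z).
Proof.
  induction N as [|q N IH]; intros H; [apply meas_const |].
  apply (meas_Rmax ps (q z) (sN N z)); [apply (H q (or_introl eq_refl)) | apply IH].
  intros; apply H; right; auto.
Qed.

Lemma ae_forall_In (Q : (M -> Om -> R) -> Om -> Prop) (N : list (M -> Om -> R)) :
  (forall p, In p N -> ae ps (Q p)) -> ae ps (fun w => forall p, In p N -> Q p w).
Proof.
  induction N as [|q N IH]; intros H.
  - eapply ae_impl; [apply ae_True | simpl; tauto].
  - eapply ae_impl; [apply ae_and; [apply (H q (or_introl eq_refl)) | apply IH] |].
    + intros; apply H; right; auto.
    + intros w [H1 H2] p [<-|Hp]; auto.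
Qed.

Section FiniteFamily.
Variable N : list (M -> Om -> R).
Hypothesis HN : forall p, In p N -> L0seminorm ps M p.

Lemma supN_zero : ae ps (fun w => sN N e0 w = 0).
Proof.
  eapply ae_impl; [apply (ae_forall_In (fun p w => p e0 w = 0) N) |].
  - intros; apply seminorm_zero; auto.
  - intros w Hw; apply Rle_antisym; [| apply supN_nonneg].
    apply supN_lub; [intros p Hp; rewrite Hw |]; auto; lra.
Qed.

Lemma supN_triangle a b : ae ps (fun w => sN N (eadd a b) w <= sN N a w + sN N b w).
Proof.
  eapply ae_impl; [apply (ae_forall_In (fun p w => p (eadd a b) w <= p a w + p b w) N) |].
  - intros p Hp; apply (HN p Hp).
  - intros w Hw; apply supN_lub.
    + intros p Hp; specialize (Hw p Hp).
      pose proof (supN_ge N a w p Hp); pose proof (supN_ge N b w p Hp); lra.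
    + pose proof (supN_nonneg N a w); pose proof (supN_nonneg N b w); lra.
Qed.

Lemma supN_esmul_ind (A : Om -> Prop) u : F A ->
  ae ps (fun w => (A w -> sN N (esmul (Defs.ind ps A) u) w = sN N u w) /\
                  (~ A w -> sN N (esmul (Defs.ind ps A) u) w = 0)).
Proof.
  intros HA.
  eapply ae_impl; [apply (ae_forall_In
    (fun p w => p (esmul (Defs.ind ps A) u) w = Rabs (Defs.ind ps A w) * p u w) N) |].
  - intros p Hp; apply (HN p Hp), meas_ind, HA.
  - intros w Hw; unfold Defs.ind in Hw.
    destruct (excluded_middle_informative (A w)) as [Ha|Ha]; split; try tauto; intros _.
    + apply supN_ext; intros p Hp; rewrite Hw, Rabs_R1 by auto; ring.
    + apply Rle_antisym; [| apply supN_nonneg].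
      apply supN_lub; [intros p Hp; rewrite Hw, Rabs_R0 by auto |]; lra.
Qed.

Lemma U0_center x r : ae ps (fun w => 0 < r w) -> U0 ps M x N r x.
Proof.
  intros Hr; unfold U0; rewrite esub_diag.
  eapply ae_impl; [apply ae_and; [apply supN_zero | exact Hr] |].
  intros w [Hw Hrw]; rewrite Hw; exact Hrw.
Qed.

Lemma Uel_center x eps lam : 0 < eps -> 0 < lam -> Uel ps M x N eps lam x.
Proof.
  intros Heps Hlam; unfold Uel; rewrite esub_diag.
  assert (1 <= Prob ps (fun w => sN N e0 w < eps)); [| lra].
  apply Prob_ae_ge_1; [apply meas_supN, HN |].
  eapply ae_impl; [apply supN_zero |]; intros w Hw; rewrite Hw; exact Heps.
Qed.

Lemma supN_esub_le_on x y z (A : Om -> Prop) : F A ->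
  ae ps (fun w => A w ->
    sN N (esub x z) w <= sN N (esub x y) w + sN N (esmul (Defs.ind ps A) (esub y z)) w).
Proof.
  intros HA; rewrite (esub_chain x y z).
  eapply ae_impl; [apply ae_and;
    [apply (supN_triangle (esub x y) (esub y z)) | apply (supN_esmul_ind A (esub y z) HA)] |].
  intros w [Htri [Hon _]] Hw; rewrite (Hon Hw); exact Htri.
Qed.

Lemma U0_cutoff c y u r (A : Om -> Prop) : F A ->
  ae ps (fun w => sN N (esub c y) w < r w) ->
  (forall w, A w -> sN N (esub c y) w + sN N u w < r w) ->
  U0 ps M c N r (esub y (esmul (Defs.ind ps A) u)).
Proof.
  intros HA Hy Hon; unfold U0; rewrite (esub_chain c y), esub_esub.
  eapply ae_impl; [apply ae_and; [apply ae_and |] |];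
    [apply (supN_triangle (esub c y) (esmul (Defs.ind ps A) u)) |
     apply (supN_esmul_ind A u HA) | exact Hy |].
  intros w [[Htri [Hin Hout]] Hyw]; destruct (classic (A w)) as [Hw|Hw].
  - rewrite (Hin Hw) in Htri; specialize (Hon w Hw); lra.
  - rewrite (Hout Hw) in Htri; lra.
Qed.

End FiniteFamily.
End Seminorms.

Section GeneratedTopology.
Variable ps : ProbSpace.
Variable M : L0Module ps.

Lemma gen_open_interior (base : (M -> Prop) -> Prop) (S : M -> Prop) :
  gen_open ps M base (fun u => exists B, base B /\ B u /\ forall v, B v -> S v).
Proof. intros u [B [HB [Hu HS]]]; exists B; repeat split; auto; exists B; auto. Qed.

Lemma gen_open_refine (base1 base2 : (M -> Prop) -> Prop) (O : M -> Prop) :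
  (forall B y, base1 B -> B y -> exists B', base2 B' /\ B' y /\ forall z, B' z -> B z) ->
  gen_open ps M base1 O -> gen_open ps M base2 O.
Proof.
  intros Hrefine HO y Hy.
  destruct (HO y Hy) as [B [HB [HBy HBO]]].
  destruct (Hrefine B y HB HBy) as [B' [HB' [HB'y HB'B]]].
  exists B'; auto.
Qed.

End GeneratedTopology.

Section Comparison.
Variable ps : ProbSpace.
Variable M : L0Module ps.
Local Notation Om := (Omega ps).
Local Notation P := (Prob ps).
Local Notation sN := (supN ps M).
Local Notation esub := (esub ps M).
Variables P1 P2 : (M -> Om -> R) -> Prop.
Hypothesis HP1 : seminorm_family M P1.
Hypothesis HP2 : seminorm_family M P2.
Hypothesis HT : forall O, T0_open M P1 O -> T0_open M P2 O.

Lemma T0_ball_refine y N1 r : finsub ps M P1 N1 -> L0pp ps r ->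
  exists c N2 r2, finsub ps M P2 N2 /\ L0pp ps r2 /\ U0 ps M c N2 r2 y /\
    forall v, U0 ps M c N2 r2 v -> U0 ps M y N1 r v.
Proof.
  intros HN1 [Hrm Hr].
  destruct (HT _ (gen_open_interior ps M (T0_base ps M P1) (U0 ps M y N1 r)) y)
    as [B [[c [N2 [r2 [HN2 [Hr2 HB]]]]] [HBy HBsub]]].
  - exists (U0 ps M y N1 r); split; [exists y, N1, r; repeat split; auto; tauto |].
    split; [apply U0_center; auto | auto].
  - exists c, N2, r2; split; [exact HN2 | split; [exact Hr2 | split; [apply HB, HBy |]]].
    intros v Hv; destruct (HBsub v (proj2 (HB v) Hv)) as [B0 [_ [HB0v HB0sub]]].
    exact (HB0sub v HB0v).
Qed.

Lemma Tel_ball_refine x N1 eps lam y : finsub ps M P1 N1 -> Uel ps M x N1 eps lam y ->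
  exists N2 eps' lam', finsub ps M P2 N2 /\ 0 < eps' /\ 0 < lam' < 1 /\
    forall z, Uel ps M y N2 eps' lam' z -> Uel ps M x N1 eps lam z.
Proof.
  intros HN1 Hy; unfold Uel in Hy.
  assert (HN1s : forall p, In p N1 -> L0seminorm ps M p) by (intros p Hp; apply HP1, HN1, Hp).
  set (g := sN N1 (esub x y)) in *.
  assert (Hg : meas ps g) by (apply meas_supN, HN1s).
  set (a := P (fun w => g w < eps) - (1 - lam)).
  assert (Ha : 0 < a) by (unfold a; lra).
  destruct (T0_ball_refine y N1 (slack ps g eps) HN1 (L0pp_slack ps g eps Hg))
    as [c [N2 [r2 [HN2 [[Hr2 _] [Hcy Hsub]]]]]].
  assert (HN2s : forall p, In p N2 -> L0seminorm ps M p) by (intros p Hp; apply HP2, HN2, Hp).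
  set (h := sN N2 (esub c y)).
  destruct (ae_lt_margin ps h r2 (a / 2)) as [eps' [Heps' Hh]];
    [apply meas_supN, HN2s | exact Hr2 | exact Hcy | lra |].
  exists N2, eps', (Rmin (a / 2) (1 / 2)).
  split; [exact HN2 | split; [exact Heps' | split]].
  { split; [apply Rmin_glb_lt; lra | pose proof (Rmin_r (a / 2) (1 / 2)); lra]. }
  intros z Hz; unfold Uel in Hz |- *.
  set (u := esub y z) in *.
  set (A := fun w => sN N2 u w < eps' /\ h w + eps' < r2 w).
  assert (Hu : Fsig ps (fun w => sN N2 u w < eps')) by (apply meas_supN, HN2s).
  assert (Hhr : Fsig ps (fun w => h w + eps' < r2 w))
    by (apply Fsig_plus_lt; [apply meas_supN, HN2s | exact Hr2]).
  assert (HA : Fsig ps A) by (apply Fsig_and; auto).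
  assert (HPA : P A > 1 - a).
  { pose proof (Prob_and_ge ps _ _ Hu Hhr : _ <= P A); pose proof (Rmin_l (a / 2) (1 / 2)); lra. }
  (* [y - 1_A u] is close to [c] in the [P2]-seminorms, hence to [y] in the [P1]-seminorms. *)
  assert (Hcut : ae ps (fun w => sN N1 (esmul (Defs.ind ps A) u) w < slack ps g eps w)).
  { assert (Hon : forall w, A w -> sN N2 (esub c y) w + sN N2 u w < r2 w)
      by (intros w [Huw Hw]; unfold h in Hw; lra).
    pose proof (Hsub _ (U0_cutoff ps M N2 HN2s c y u r2 A HA Hcy Hon)) as Hc.
    unfold U0 in Hc; rewrite esub_esub in Hc; exact Hc. }
  assert (Hgood : ae ps (fun w => g w < eps /\ A w -> sN N1 (esub x z) w < eps)).
  { eapply ae_impl;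
      [apply ae_and; [apply (supN_esub_le_on ps M N1 HN1s x y z A HA) | exact Hcut] |].
    intros w [Hle Hlt] [Hgw HAw]; specialize (Hle HAw).
    pose proof (slack_eq ps g eps w Hgw); fold g u in Hle; lra. }
  pose proof (Prob_le_ae ps _ _ (Fsig_and ps _ _ (Hg eps) HA)
    (meas_supN ps M N1 (esub x z) HN1s eps) Hgood).
  pose proof (Prob_and_ge ps _ _ (Hg eps) HA).
  unfold a in *; lra.
Qed.

Lemma Tel_base_refine B y : Tel_base ps M P1 B -> B y ->
  exists B', Tel_base ps M P2 B' /\ B' y /\ forall z, B' z -> B z.
Proof.
  intros [x [N1 [eps [lam [HN1 [_ [_ HB]]]]]]] Hy.
  destruct (Tel_ball_refine x N1 eps lam y HN1 (proj1 (HB y) Hy))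
    as [N2 [eps' [lam' [HN2 [Heps' [Hlam' Hsub]]]]]].
  exists (Uel ps M y N2 eps' lam'); split; [| split].
  - exists y, N2, eps', lam'; repeat split; auto; lra.
  - apply Uel_center; [intros p Hp; apply HP2, HN2, Hp | exact Heps' | lra].
  - intros z Hz; apply HB, Hsub, Hz.
Qed.

End Comparison.

Theorem proposition4 (ps : ProbSpace) (M : L0Module ps)
  (P1 P2 : (M -> Omega ps -> R) -> Prop) :
  stable M ->
  seminorm_family M P1 -> seminorm_family M P2 ->
  (exists p, P1 p) -> (exists p, P2 p) ->
  (forall O : M -> Prop, T0_open M P1 O <-> T0_open M P2 O) ->
  (forall O : M -> Prop, Tel_open M P1 O <-> Tel_open M P2 O).
Proof.
  intros _ HP1 HP2 _ _ HT O; split; apply gen_open_refine.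
  - apply (Tel_base_refine ps M P1 P2 HP1 HP2); intros O' H; apply HT, H.
  - apply (Tel_base_refine ps M P2 P1 HP2 HP1); intros O' H; apply HT, H.
Qed.
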